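(* Let $\epsilon>0$ be fixed. Define the randomized mechanism $\mathcal{M}$ (BiSample-MD) whose input is a pair $(v,\epsilon_u)$ with $v\in[-1,1]$ and $\epsilon_u\in\mathbb{R}$, as follows. First set $v'=v$ if $\epsilon\le\epsilon_u$ and $v'=\bot$ (a null value) otherwise. Sample $s\in\{0,1\}$ uniformly at random. If $s=0$, generate a Bernoulli variable $b\in\{0,1\}$ with $$\Pr[b=1]=\begin{cases}\frac{1-e^{\epsilon}}{1+e^{\epsilon}}\cdot\frac{v'}{2}+\frac12 & \text{if } v'\in[-1,1],\\[2pt] \frac{1}{e^{\epsilon}+1} & \text{if } v'=\bot;\end{cases}$$ if $s=1$, generate a Bernoulli variable $b\in\{0,1\}$ with $$\Pr[b=1]=\begin{cases}\frac{e^{\epsilon}-1}{e^{\epsilon}+1}\cdot\frac{v'}{2}+\frac12 & \text{if } v'\in[-1,1],\\[2pt] \frac{1}{e^{\epsilon}+1} & \text{if } v'=\bot.\end{cases}$$ Output $\langle s,b\rangle$. Then $\mathcal{M}$ satisfies $\epsilon$-local differential privacy: for any two inputs $t_1,t_2$ and any output $o\in\{0,1\}\times\{0,1\}$, $\Pr[\mathcal{M}(t_1)=o]\le e^{\epsilon}\Pr[\mathcal{M}(t_2)=o]$.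
   Context: A randomized mechanism $\mathcal{M}$ satisfies $\epsilon$-local differential privacy ($\epsilon$-LDP) if for every two inputs $t_1,t_2$ in its domain and every output $t^*$ in its range, $\Pr[\mathcal{M}(t_1)=t^*]\le \exp(\epsilon)\Pr[\mathcal{M}(t_2)=t^*]$. Here $\epsilon_u$ models the user's privacy preference: the user reveals the real value only if the offered budget $\epsilon$ is at most $\epsilon_u$. *)

From Stdlib Require Import Reals Lra.
Open Scope R_scope.

(* The perturbed value v': Some v (a value in [-1,1]) or None (= bottom). *)
Definition vprime (eps v eps_u : R) : option R :=
  if Rle_dec eps eps_u then Some v else None.

Definition prob_b1 (eps : R) (s : bool) (v' : option R) : R :=
  match v' with
  | Some x =>
      if s then (exp eps - 1) / (exp eps + 1) * (x / 2) + 1 / 2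
      else (1 - exp eps) / (1 + exp eps) * (x / 2) + 1 / 2
  | None => 1 / (exp eps + 1)
  end.

(* Output probability of BiSample-MD on input (v, eps_u):
   Pr[M(v,eps_u) = <s,b>] = Pr[s] * Pr[b | s] with s uniform on {0,1}
   (true encodes 1, false encodes 0). *)
Definition bisample_md_prob (eps v eps_u : R) (s b : bool) : R :=
  let p := prob_b1 eps s (vprime eps v eps_u) in
  (1 / 2) * (if b then p else 1 - p).

(* Every conditional probability Pr[b | s] of BiSample-MD, for either value of
   b and whether v' is a value in [-1,1] or bottom, lies in the band
   [1/(e^eps+1), e^eps/(e^eps+1)], whose endpoints differ by the factor e^eps.
   Any two numbers in that band are therefore within a factor e^eps of each
   other, and the common factor Pr[s] = 1/2 does not affect the ratio. *)
From Stdlib Require Import Reals Lra.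
Open Scope R_scope.

Definition in_band (k p : R) : Prop := 1 / (k + 1) <= p <= k / (k + 1).

Lemma in_band_le_mul (k p q : R) : 0 <= k -> in_band k p -> in_band k q -> p <= k * q.
Proof.
  unfold in_band; intros Hk [_ Hp] [Hq _].
  replace (k / (k + 1)) with (k * (1 / (k + 1))) in Hp by (field; lra).
  apply Rle_trans with (k * (1 / (k + 1))); [exact Hp|].
  apply Rmult_le_compat_l; assumption.
Qed.

Lemma in_band_compl (k p : R) : 0 <= k -> in_band k p -> in_band k (1 - p).
Proof.
  unfold in_band; intros Hk [Hlo Hhi].
  replace (1 - 1 / (k + 1)) with (k / (k + 1)) in * by (field; lra).
  replace (1 / (k + 1)) with (1 - k / (k + 1)) in * by (field; lra).
  lra.
Qed.

Lemma in_band_affine (k x : R) : 1 <= k -> -1 <= x <= 1 ->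
  in_band k ((k - 1) / (k + 1) * (x / 2) + 1 / 2).
Proof.
  intros Hk Hx; unfold in_band.
  replace ((k - 1) / (k + 1) * (x / 2) + 1 / 2)
    with (((k - 1) * x + k + 1) / 2 * (1 / (k + 1))) by (field; lra).
  replace (k / (k + 1)) with (k * (1 / (k + 1))) by (field; lra).
  assert (Hinv : 0 < 1 / (k + 1)) by (apply Rdiv_lt_0_compat; lra).
  split; [rewrite <- (Rmult_1_l (1 / (k + 1))) at 1|];
    apply Rmult_le_compat_r; nra.
Qed.

Lemma prob_b1_in_band (eps : R) (s : bool) (v' : option R) : 0 < eps ->
  (forall x, v' = Some x -> -1 <= x <= 1) ->
  in_band (exp eps) (prob_b1 eps s v').
Proof.
  intros Heps Hv'.
  assert (Hk : 1 < exp eps) by (pose proof (exp_ineq1 eps); lra).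
  destruct v' as [x|]; simpl.
  - specialize (Hv' x eq_refl).
    destruct s; [apply in_band_affine; lra|].
    (* the s = 0 branch is the s = 1 branch at -x *)
    replace ((1 - exp eps) / (1 + exp eps) * (x / 2) + 1 / 2)
      with ((exp eps - 1) / (exp eps + 1) * (- x / 2) + 1 / 2) by (field; lra).
    apply in_band_affine; lra.
  - unfold in_band; split; [lra|].
    apply Rmult_le_compat_r; [left; apply Rinv_0_lt_compat|]; lra.
Qed.

Lemma vprime_range (eps v eu x : R) : -1 <= v <= 1 ->
  vprime eps v eu = Some x -> -1 <= x <= 1.
Proof.
  unfold vprime; destruct (Rle_dec eps eu); intros Hv H; [|discriminate].
  injection H as <-; exact Hv.
Qed.

Lemma bisample_md_cond_in_band (eps v eu : R) (s b : bool) : 0 < eps -> -1 <= v <= 1 ->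
  in_band (exp eps) (2 * bisample_md_prob eps v eu s b).
Proof.
  intros Heps Hv.
  assert (Hp := prob_b1_in_band eps s (vprime eps v eu) Heps (fun x => vprime_range eps v eu x Hv)).
  unfold bisample_md_prob.
  replace (2 * _) with (if b then prob_b1 eps s (vprime eps v eu)
                        else 1 - prob_b1 eps s (vprime eps v eu)) by (destruct b; field).
  destruct b; [exact Hp|].
  apply in_band_compl; [left; apply exp_pos | exact Hp].
Qed.

Theorem theorem4 (eps : R) (Heps : 0 < eps)
  (v1 eu1 v2 eu2 : R)
  (Hv1 : -1 <= v1 <= 1) (Hv2 : -1 <= v2 <= 1)
  (s b : bool) :
  bisample_md_prob eps v1 eu1 s b <= exp eps * bisample_md_prob eps v2 eu2 s b.
Proof.
  assert (H := in_band_le_mul (exp eps) _ _ (Rlt_le _ _ (exp_pos eps))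
                 (bisample_md_cond_in_band eps v1 eu1 s b Heps Hv1)
                 (bisample_md_cond_in_band eps v2 eu2 s b Heps Hv2)).
  lra.
Qed.
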